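(* Let $n\geq 4$, $G=M_{3^n}=\langle a,b\mid a^{3^{n-1}}=b^3=e,\ b^{-1}ab=a^{3^{n-2}+1}\rangle$, $c=a^{3^{n-2}}$, $C=\langle c\rangle$, $B=\langle b\rangle$, $H=C\times B$. Let $\mathcal{A}$ be the $S$-ring over $G$ whose basic sets are $Z_0=\{e\}$, $Z_1=\{b,b^2\}$, $Z_2=\{c,c^2\}$, $Z_3=\{cb,cb^2,c^2b,c^2b^2\}$, $Z_4=a\{e,cb,c^2b^2\}\cup a^{-1}\{e,c^2b,cb^2\}$, $Z_5=(aH\cup a^{-1}H)\setminus Z_4$, $X_k=a^{3k}C\cup a^{-3k}C$ and $Y_k=(a^{3k}H\cup a^{-3k}H)\setminus X_k$ for $k=1,\dots,\frac{3^{n-3}-1}{2}$, and $T_j=a^jH\cup a^{-j}H$ for all integers $2\leq j\leq \frac{3^{n-2}-1}{2}$ with $j\not\equiv 0\pmod 3$. Then $\mathcal{A}$ is not schurian.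
   Context: For $X\subseteq G$, $\underline{X}=\sum_{x\in X}x\in\mathbb{Z}G$. A subring $\mathcal{A}$ of $\mathbb{Z}G$ is an $S$-ring over $G$ with basic sets forming a partition $\mathcal{S}(\mathcal{A})$ of $G$ if $\{e\}\in\mathcal{S}(\mathcal{A})$, $X\in\mathcal{S}(\mathcal{A})\Rightarrow X^{-1}\in\mathcal{S}(\mathcal{A})$, and $\mathcal{A}=\mathrm{Span}_{\mathbb{Z}}\{\underline{X}: X\in\mathcal{S}(\mathcal{A})\}$ (the span of the listed sets is indeed closed under multiplication). Let $G_{right}=\{x\mapsto xg: g\in G\}$. An $S$-ring $\mathcal{A}$ over $G$ is schurian if there is a permutation group $\Gamma$ with $G_{right}\leq\Gamma\leq\mathrm{Sym}(G)$ such that the basic sets of $\mathcal{A}$ are exactly the orbits on $G$ of the stabilizer $\Gamma_e$ of $e$ in $\Gamma$. *)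

From mathcomp Require Import all_boot all_fingroup.
Set Implicit Arguments. Unset Strict Implicit. Unset Printing Implicit Defensive.
Local Open Scope group_scope.

Section Defs.
Variable gT : finGroupType.

Definition rmul_perm (g : gT) : {perm gT} := perm (mulIg g).

Definition G_right : {set {perm gT}} := [set rmul_perm g | g : gT].

(* A partition S of G (= all of gT) into basic sets is schurian if some
   permutation group Gam with G_right <= Gam <= Sym(G) has point
   stabilizer Gam_e whose orbits on G are exactly the sets of S. *)
Definition schurian_partition (S : {set {set gT}}) : Prop :=
  exists Gam : {group {perm gT}},
    G_right \subset Gam /\
    [set orbit 'P 'C_Gam[(1 : gT) | 'P] x | x : gT] = S.

Variables (n : nat) (a b : gT).
Definition cM : gT := a ^+ (3 ^ (n - 2)).
Definition CM : {set gT} := <[cM]>.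
Definition BM : {set gT} := <[b]>.
Definition HM : {set gT} := CM * BM.

Definition Z0 : {set gT} := [set 1].
Definition Z1 : {set gT} := [set b; b ^+ 2].
Definition Z2 : {set gT} := [set cM; cM ^+ 2].
Definition Z3 : {set gT} :=
  [set cM * b; cM * b ^+ 2; cM ^+ 2 * b; cM ^+ 2 * b ^+ 2].
Definition Z4 : {set gT} :=
  (a *: [set 1; cM * b; cM ^+ 2 * b ^+ 2]) :|:
  (a^-1 *: [set 1; cM ^+ 2 * b; cM * b ^+ 2]).
Definition Z5 : {set gT} := ((a *: HM) :|: (a^-1 *: HM)) :\: Z4.
Definition Xk (k : nat) : {set gT} :=
  (a ^+ (3 * k) *: CM) :|: (a ^- (3 * k) *: CM).
Definition Yk (k : nat) : {set gT} :=
  ((a ^+ (3 * k) *: HM) :|: (a ^- (3 * k) *: HM)) :\: Xk k.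
Definition Tj (j : nat) : {set gT} :=
  (a ^+ j *: HM) :|: (a ^- j *: HM).

Definition basic_sets_A : {set {set gT}} :=
  [set S : {set gT} |
    [|| S == Z0, S == Z1, S == Z2, S == Z3, S == Z4, S == Z5,
        [exists k : 'I_(3 ^ n),
           [&& 1 <= (k : nat), (k : nat) <= (3 ^ (n - 3) - 1) %/ 2
             & (S == Xk k) || (S == Yk k)]]
      | [exists j : 'I_(3 ^ n),
           [&& 2 <= (j : nat), (j : nat) <= (3 ^ (n - 2) - 1) %/ 2,
               (j : nat) %% 3 != 0 & S == Tj j]]]].
End Defs.

From mathcomp Require Import all_boot all_fingroup all_algebra zify cyclic.
From mathcomp.algebra_tactics Require Import ring.
Set Implicit Arguments. Unset Strict Implicit. Unset Printing Implicit Defensive.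
Import GRing.Theory Num.Theory.
Local Open Scope group_scope.

(* Suppose Gam >= G_right has point stabilizer Gam_e with the basic sets as
   orbits. Every g in Gam_e preserves each relation [y * x^-1 \in S] with S a
   basic set, and since Z1 is an orbit some such g sends b to b^2. Put
   x_i = g (a^i): the quotients z_i = x_(i+1) x_i^-1 lie in Z4 and
   q_i = x_(i+3) x_i^-1 lie in X_1. Comparing the two factorisations
   q_(i+1) z_i = z_(i+3) q_i of x_(i+4) x_i^-1 in the coordinates a^al c^be b^v
   shows that z is 3-periodic and q constant, whence x_N = c^e and
   x_(N-1) = z_2^-1 c^e for N = 3^(n-2), where e = +-1 is the sign of z_2.
   Then g(b) g(a^(N-1))^-1 = b^2 x_(N-1)^-1 is not in Z4 although
   b a^(1-N) is. *)

Section IntegerPowers.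
Variable gT : finGroupType.
Implicit Types (x : gT) (z : int).

Definition expgz x z : gT := x ^+ `|(z %% #[x]%:Z)%Z|.

Lemma absz_modz_order x z : (`|(z %% #[x]%:Z)%Z|%:Z = (z %% #[x]%:Z)%Z)%R.
Proof. by rewrite gez0_abs // modz_ge0 // eqz_nat -lt0n order_gt0. Qed.

Lemma expgz_nat x (k : nat) : expgz x k = x ^+ k.
Proof. by rewrite /expgz modz_nat absz_nat expg_mod_order. Qed.

Lemma expgz_eq_order x z1 z2 :
  expgz x z1 = expgz x z2 <-> (#[x]%:Z %| (z1 - z2)%R)%Z.
Proof.
rewrite -eqz_mod_dvd /expgz; split=> [/eqP | /eqP eq_mod]; last by rewrite eq_mod.
have lt_order z : (`|(z %% #[x]%:Z)%Z| < #[x])%N.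
  by rewrite -ltz_nat absz_modz_order ltz_pmod // ltz_nat order_gt0.
rewrite eq_expg_mod_order !modn_small // => /eqP eq_abs.
by rewrite -absz_modz_order eq_abs absz_modz_order.
Qed.

Lemma expgz_congr x z1 z2 : (#[x]%:Z %| (z1 - z2)%R)%Z -> expgz x z1 = expgz x z2.
Proof. by move/expgz_eq_order. Qed.

Lemma expgzD x z1 z2 : expgz x (z1 + z2)%R = expgz x z1 * expgz x z2.
Proof.
rewrite {2 3}/expgz -expgD -expgz_nat; apply: expgz_congr.
rewrite -eqz_mod_dvd PoszD !absz_modz_order.
by rewrite modzDml modzDmr.
Qed.

Lemma expgzJ x y z : expgz x z ^ y = expgz (x ^ y) z.
Proof. by rewrite /expgz orderJ conjXg. Qed.

Lemma expgzX x m z : expgz (x ^+ m) z = expgz x (z * m%:Z)%R.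
Proof.
set o := #[x ^+ m].
have dvd_xm : (#[x] %| m * o)%N by rewrite order_dvdn expgM expg_order.
rewrite {1}/expgz -/o -expgM -(expgz_nat x (m * _)); apply: expgz_congr.
apply: dvdz_trans (_ : ((m * o)%N%:Z %| _)%Z); first by rewrite dvdzE !absz_nat.
apply/dvdzP; exists (- (z %/ o%:Z)%Z)%R.
rewrite PoszM absz_modz_order.
have eq_z := divz_eq z o%:Z.
rewrite [X in (_ - X * _)%R]eq_z; ring.
Qed.

End IntegerPowers.

Lemma metacyclic_orders (gT : finGroupType) (a b : gT) (p q : nat) :
    <<[set a; b]>> = [set: gT] -> <[b]> \subset 'N(<[a]>) ->
    #|gT| = (p * q)%N -> (#[a] %| p)%N -> (#[b] %| q)%N ->
  [/\ #[a] = p, #[b] = q & <[a]> :&: <[b]> = 1].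
Proof.
move=> gen_ab nab card_pq oa_p ob_q.
have /andP[p_gt0 q_gt0] : (0 < p) && (0 < q).
  by rewrite -muln_gt0 -card_pq; apply/card_gt0P; exists 1.
have sub_ab : [set: gT] \subset <[a]> * <[b]>.
  rewrite -gen_ab -(norm_joinEr nab) gen_subG subUset !sub1set.
  by rewrite (subsetP (joing_subl _ _)) ?(subsetP (joing_subr _ _)) ?cycle_id.
have le_pq_ab : (p * q <= #|(<[a]> * <[b]>)%g|)%N.
  by rewrite -card_pq -cardsT subset_leq_card.
have ti_gt0 : (0 < #|<[a]> :&: <[b]>|)%N by apply/card_gt0P; exists 1; rewrite inE !group1.
have oa_le := dvdn_leq p_gt0 oa_p; have ob_le := dvdn_leq q_gt0 ob_q.
have card_eq : (#[a] * #[b] = #|(<[a]> * <[b]>)%g| * #|<[a]> :&: <[b]>|)%N.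
  by rewrite !orderE mul_cardG.
have ti1 : #|<[a]> :&: <[b]>| = 1%N by nia.
split; [nia | nia | exact: card_le1_trivg (eq_leq ti1)].
Qed.

Section SchurianStabilizer.
Variables (gT : finGroupType) (Gam : {group {perm gT}}).
Hypothesis right_sub : G_right gT \subset Gam.

Definition preserves_quotients (g : gT -> gT) (S : {set gT}) :=
  forall x y, y * x^-1 \in S -> g y * (g x)^-1 \in S.

Local Notation Gam_e := 'C_Gam[1 | 'P].
Local Notation basic := [set orbit 'P Gam_e w | w : gT].

(* [d : u |-> g (u * x) * (g x)^-1] lies in [Gam_e] and sends [y * x^-1] to
   [g y * (g x)^-1]. *)
Lemma stabilizer_preserves_quotients S g :
  S \in basic -> g \in Gam_e -> preserves_quotients g S.
Proof.
move=> /imsetP[s _ ->] g_e x y /orbitP[h h_e hs].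
have rmulE (w u : gT) : rmul_perm w u = u * w by rewrite permE.
have rmul_Gam w : rmul_perm w \in Gam by apply: (subsetP right_sub); apply: imset_f.
have /setIP[g_Gam /astab1P g1] := g_e.
set d := rmul_perm x * g * rmul_perm (g x)^-1.
have d_e : d \in Gam_e.
  apply/setIP; split; first by rewrite !groupM ?rmul_Gam.
  by apply/astab1P; rewrite /= apermE /d !permM !rmulE mul1g mulgV.
have -> : g y * (g x)^-1 = aperm s (h * d).
  by rewrite apermE permM -[h s]apermE hs /d !permM !rmulE mulgKV.
exact: mem_orbit (groupM h_e d_e).
Qed.

Lemma basic_transport S x y :
  S \in basic -> x \in S -> y \in S -> exists2 g, g \in Gam_e & g x = y.
Proof.
move=> /imsetP[s _ ->] xs ys.
have /orbitP[g g_e <-] : y \in orbit 'P Gam_e x by rewrite (orbit_eqP xs).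
by exists g.
Qed.

End SchurianStabilizer.

Section ModularGroup.
Variables (gT : finGroupType) (n : nat) (a b : gT).
Hypotheses (n_ge4 : (4 <= n)%N) (order_a : #[a] = (3 * 3 ^ (n - 2))%N)
  (order_b : #[b] = 3%N) (tiAB : <[a]> :&: <[b]> = 1)
  (conj_ab : a ^ b = a ^+ (3 ^ (n - 2) + 1)).

Local Notation N := (3 ^ (n - 2))%N.
Let K := (3 ^ (n - 4))%N.

Lemma N_eq : N = (9 * K)%N.
Proof. by rewrite /K -(expnD 3 2); congr expn; lia. Qed.

Lemma NzE : (N%:Z = 9 * K%:Z)%R.
Proof. by rewrite N_eq PoszM. Qed.

Lemma K_gt0 : (0 < K)%N.
Proof. by rewrite expn_gt0. Qed.

Lemma expgz_a_eq z1 z2 q : (z1 - z2 = q * (3 * N%:Z))%R -> expgz a z1 = expgz a z2.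
Proof. by move=> eq_z; apply: expgz_congr; apply/dvdzP; exists q; rewrite order_a PoszM. Qed.

Lemma conj_a_invb : a ^ b^-1 = a ^+ (1 + 2 * N).
Proof.
have conj_b : (a ^+ (1 + 2 * N)) ^ b = a.
  rewrite conjXg conj_ab -expgM -(expgz_nat a) -[a in RHS](expgz_nat a 1).
  by apply: (@expgz_a_eq _ _ (1 + 6 * K%:Z)%R); rewrite !(PoszM, PoszD) NzE; ring.
by rewrite -{1}conj_b conjgK.
Qed.

Lemma mulb_expgz_a j : b * expgz a j = expgz a (j + 2 * j * N%:Z)%R * b.
Proof.
rewrite conjgCV expgzJ conj_a_invb expgzX; congr (_ * _).
by apply: (@expgz_a_eq _ _ 0%R); rewrite !(PoszM, PoszD); ring.
Qed.

Lemma mulbX_expgz_a (m : nat) j :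
  b ^+ m * expgz a j = expgz a (j + 2 * j * m%:Z * N%:Z)%R * b ^+ m.
Proof.
elim: m j => [|m IHm] j.
  by rewrite !expg0 mulg1 mul1g; apply: (@expgz_a_eq _ _ 0%R); ring.
rewrite expgS -mulgA IHm mulgA mulb_expgz_a -mulgA -expgS; congr (_ * _).
apply: (@expgz_a_eq _ _ (4 * j * m%:Z * 3 * K%:Z)%R).
by rewrite -[m.+1]addn1 PoszD NzE; ring.
Qed.

Lemma expgz_b_a v j :
  expgz b v * expgz a j = expgz a (j + 2 * j * v * N%:Z)%R * expgz b v.
Proof.
rewrite {1 3}/expgz mulbX_expgz_a; congr (_ * _).
apply: (@expgz_a_eq _ _ (- 2 * j * (v %/ 3)%Z)%R).
have eq_v := divz_eq v 3; rewrite absz_modz_order order_b.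
rewrite [X in (_ - (_ + _ * _ * X * _))%R]eq_v; ring.
Qed.

(* [a ^ al * c ^ be * b ^ v] with [c = a ^ N]; splitting the exponent of [a]
   as [al + be * N] keeps the small part [al] recoverable (see [acb_inj]). *)
Definition acb (al be v : int) : gT := expgz a (al + be * N%:Z)%R * expgz b v.

Lemma acb_mul al be v ga de w :
  acb al be v * acb ga de w = acb (al + ga)%R (be + de + 2 * ga * v)%R (v + w)%R.
Proof.
rewrite /acb mulgA -[expgz a _ * _ * _]mulgA expgz_b_a mulgA -expgzD -mulgA -expgzD.
congr (_ * _); apply: (@expgz_a_eq _ _ (2 * de * v * 3 * K%:Z)%R).
by rewrite NzE; ring.
Qed.

Lemma acb_congr al be v al' be' v' :
    ((3 * N%:Z)%R %| ((al + be * N%:Z) - (al' + be' * N%:Z))%R)%Z ->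
    (3 %| (v - v')%R)%Z ->
  acb al be v = acb al' be' v'.
Proof.
move=> dvd_a dvd_b; rewrite /acb; congr (_ * _); apply: expgz_congr.
  by rewrite order_a PoszM.
by rewrite order_b.
Qed.

Lemma acb_eq al be v be' v' :
  (3 %| (be - be')%R)%Z -> (3 %| (v - v')%R)%Z -> acb al be v = acb al be' v'.
Proof.
move=> /dvdzP[q eq_q] dvd_v; apply: acb_congr => //; apply/dvdzP; exists q.
have -> : (al + be * N%:Z - (al + be' * N%:Z) = (be - be') * N%:Z)%R by ring.
by rewrite eq_q; ring.
Qed.

Lemma acb_inj al be v al' be' v' :
    acb al be v = acb al' be' v' -> (-9 < al - al' < 9)%R ->
  [/\ al = al', (3 %| (be - be')%R)%Z & (3 %| (v - v')%R)%Z].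
Proof.
rewrite /acb => eq_acb near_al.
set x := expgz a _ in eq_acb; set x' := expgz a _ in eq_acb.
set y := expgz b v in eq_acb; set y' := expgz b v' in eq_acb.
have eq_xy : x'^-1 * x = y' * y^-1 by rewrite -[x](mulgK y) eq_acb -!mulgA mulKg.
have : x'^-1 * x \in <[a]> :&: <[b]> by rewrite inE {2}eq_xy !groupM ?groupV ?mem_cycle.
rewrite tiAB inE => /eqP xy1.
have /expgz_eq_order : x = x' by rewrite -[x](mulKVg x') xy1 mulg1.
have /expgz_eq_order : y = y' by rewrite -[y'](mulgKV y) -eq_xy xy1 mul1g.
rewrite order_a order_b PoszM => dvd_v /dvdzP[q eq_q].
have eq_al : (al - al' = (3 * q - (be - be')) * N%:Z)%R.
  have -> : (al - al' = al + be * N%:Z - (al' + be' * N%:Z) - (be - be') * N%:Z)%R.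
    by ring.
  by rewrite eq_q; ring.
have N_ge9 : (9 <= N%:Z)%R by rewrite NzE; have := K_gt0; lia.
have q0 : (3 * q - (be - be') = 0)%R by nia.
split=> //; last by apply/dvdzP; exists q; lia.
by move: eq_al; rewrite q0 mul0r; lia.
Qed.

Lemma acb0 : acb 0 0 0 = 1.
Proof. by rewrite /acb mul0r addr0 (expgz_nat a 0) (expgz_nat b 0) mulg1. Qed.

Lemma acbV al be v : (acb al be v)^-1 = acb (- al) (- be + 2 * al * v)%R (- v).
Proof. by apply/eqP; rewrite eq_invg_mul acb_mul -acb0; apply/eqP; congr acb; ring. Qed.

Lemma acbX d u (m : nat) : acb d u 0 ^+ m = acb (d * m%:Z)%R (u * m%:Z)%R 0.
Proof.
elim: m => [|m IHm]; first by rewrite expg0 !mulr0 acb0.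
by rewrite expgSr IHm acb_mul; congr acb; rewrite -[m.+1]addn1 PoszD; ring.
Qed.

Lemma expa_acb (k : nat) : a ^+ k = acb k 0 0.
Proof. by rewrite /acb mul0r addr0 expgz_nat (expgz_nat b 0) mulg1. Qed.

Lemma expc_acb (u : nat) : cM n a ^+ u = acb 0 u 0.
Proof. by rewrite /acb add0r -PoszM !expgz_nat mulg1 -expgM mulnC. Qed.

Lemma expb_acb (v : nat) : b ^+ v = acb 0 0 v.
Proof. by rewrite /acb mul0r addr0 (expgz_nat a 0) expgz_nat mul1g. Qed.

Lemma a_acb : a = acb 1 0 0.   Proof. by rewrite -expa_acb expg1. Qed.
Lemma c_acb : cM n a = acb 0 1 0. Proof. by rewrite -expc_acb expg1. Qed.
Lemma b_acb : b = acb 0 0 1.   Proof. by rewrite -expb_acb expg1. Qed.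

Definition Z4_form (z : gT) := exists e t v,
  [/\ e = 1%R \/ e = (-1)%R, (3 %| (t - e * v)%R)%Z & z = acb e t v].

Definition X1_form (z : gT) := exists d u, (d = 3%R \/ d = (-3)%R) /\ z = acb d u 0.

Lemma mem_Z4_form z : z \in Z4 n a b -> Z4_form z.
Proof.
rewrite /Z4 inE => /orP[] /lcosetP[y y_in ->]; move: y_in.
all: rewrite !inE => /orP[/orP[]|] /eqP ->.
all: rewrite ?mulg1 ?expc_acb ?c_acb ?expb_acb ?b_acb ?a_acb ?acbV ?acb_mul.
all: by do 3 eexists; split; [..|reflexivity]; lia.
Qed.

Lemma mem_X1_form z : z \in Xk n a 1 -> X1_form z.
Proof.
rewrite /Xk inE => /orP[] /lcosetP[y /cycleP[i ->] ->].
all: rewrite -/(cM n a) expc_acb expa_acb ?acbV acb_mul.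
all: by do 2 eexists; split; [|reflexivity]; lia.
Qed.

Lemma a_in_Z4 : a \in Z4 n a b.
Proof. by rewrite inE mem_lcoset mulVg !inE eqxx. Qed.

Lemma a3_in_X1 : a ^+ 3 \in Xk n a 1.
Proof. by rewrite inE mem_lcoset mulVg group1. Qed.

Lemma b_aN1_in_Z4 : b * (a ^+ (N - 1))^-1 \in Z4 n a b.
Proof.
have -> : b * (a ^+ (N - 1))^-1 = a * (cM n a * b).
  rewrite expa_acb acbV c_acb [in RHS]b_acb [in X in X * _]b_acb [in RHS]a_acb !acb_mul.
  apply: acb_congr => //; apply/dvdzP; exists (- 6 * K%:Z)%R.
  have -> : ((N - 1)%N%:Z = N%:Z - 1)%R by rewrite subzn // expn_gt0.
  by rewrite NzE; ring.
by rewrite inE mem_lcoset mulKg !inE eqxx orbT.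
Qed.

Lemma Z4_X1_exchange z z' q q' :
    Z4_form z -> Z4_form z' -> X1_form q -> X1_form q' -> q' * z = z' * q ->
  z' = z /\ q' = q.
Proof.
move=> [e [t [v [e_sign dvd_t ->]]]] [e' [t' [v' [e'_sign dvd_t' ->]]]].
move=> [d [u [d_sign ->]]] [d' [u' [d'_sign ->]]].
rewrite !acb_mul => /acb_inj[].
  by case: e_sign => ->; case: e'_sign => ->; case: d_sign => ->; case: d'_sign => ->.
move=> eq_a dvd_c dvd_b.
have [eq_d eq_e] : d' = d /\ e' = e.
  by case: e_sign eq_a => ->; case: e'_sign => ->; case: d_sign => ->; case: d'_sign => ->; lia.
subst d' e'.
split; apply: acb_eq => //.
all: by case: e_sign dvd_t dvd_t' dvd_c => ->; case: d_sign => ->; lia.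
Qed.

Lemma X1_Z4_sign e t v z1 z0 q :
    e = 1%R \/ e = (-1)%R -> Z4_form z1 -> Z4_form z0 -> X1_form q ->
    q = acb e t v * z1 * z0 ->
  exists u, q = acb (3 * e)%R u 0.
Proof.
move=> e_sign [e1 [t1 [v1 [e1_sign _ ->]]]] [e0 [t0 [v0 [e0_sign _ ->]]]].
move=> [d [u [d_sign ->]]]; rewrite !acb_mul => /acb_inj[].
  by case: e_sign => ->; case: e1_sign => ->; case: e0_sign => ->; case: d_sign => ->.
move=> eq_a _ _; exists u; congr acb.
by case: e_sign eq_a => ->; case: e1_sign => ->; case: e0_sign => ->; case: d_sign => ->; lia.
Qed.

Lemma b2_notin_Z4 e t v :
    e = 1%R \/ e = (-1)%R -> (3 %| (t - e * v)%R)%Z ->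
  ~ Z4_form (b ^+ 2 * (acb 0 e 0)^-1 * acb e t v).
Proof.
move=> e_sign dvd_t [e' [t' [v' [e'_sign dvd_t' eq_z]]]].
have : b ^+ 2 = acb e' t' v' * (acb e t v)^-1 * acb 0 e 0.
  by rewrite -eq_z !mulgK mulgKV.
rewrite expb_acb !acbV !acb_mul => /acb_inj[].
  by case: e_sign => ->; case: e'_sign => ->.
by case: e_sign dvd_t => ->; case: e'_sign dvd_t' => ->; lia.
Qed.

Section Chain.
Variable x : nat -> gT.
Hypotheses (x0 : x 0 = 1)
  (step_Z4 : forall i, Z4_form (x i.+1 * (x i)^-1))
  (step_X1 : forall i, X1_form (x (i + 3) * (x i)^-1)).

Let z i := x i.+1 * (x i)^-1.
Let q i := x (i + 3) * (x i)^-1.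

Lemma chain_periodic i : z (i + 3) = z i /\ q i.+1 = q i.
Proof.
apply: Z4_X1_exchange (step_Z4 i) (step_Z4 (i + 3)) (step_X1 i) (step_X1 i.+1) _.
by rewrite /q /z addSn !mulgA !mulgKV.
Qed.

Lemma chain_z_periodic i j : z (i + 3 * j) = z i.
Proof.
elim: j => [|j IHj]; first by rewrite muln0 addn0.
by rewrite mulnS addnCA addnC (proj1 (chain_periodic _)).
Qed.

Lemma chain_x_mul3 j : x (3 * j) = q 0 ^+ j.
Proof.
have q_const i : q i = q 0 by elim: i => [//|i IHi]; rewrite (proj2 (chain_periodic i)).
elim: j => [|j IHj]; first by rewrite muln0 x0 expg0.
by rewrite -[x _](mulgKV (x (3 * j)%N)) expgS -IHj -(q_const (3 * j)%N) /q mulnS addnC.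
Qed.

Lemma chain_end_notin_Z4 : ~ Z4_form (b ^+ 2 * (x (N - 1))^-1).
Proof.
have [e [t [v [e_sign dvd_t z2_eq]]]] : Z4_form (z 2) := step_Z4 2.
have q0_eq : q 0 = acb e t v * z 1 * z 0.
  by rewrite -z2_eq /q /z !mulgA !mulgKV.
have [u q0_acb] : exists u, q 0 = acb (3 * e)%R u 0.
  exact: X1_Z4_sign e_sign (step_Z4 1) (step_Z4 0) (step_X1 0) q0_eq.
have xN : x N = acb 0 e 0.
  rewrite (_ : N = 3 * (3 * K))%N; last by rewrite N_eq; lia.
  rewrite chain_x_mul3 q0_acb acbX; apply: acb_congr => //.
  by apply/dvdzP; exists (u * K%:Z)%R; rewrite NzE !PoszM; ring.
have xN1 : x (N - 1) = (acb e t v)^-1 * x N.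
  have N1_eq : (N - 1 = 2 + 3 * (3 * K - 1))%N by rewrite N_eq; have := K_gt0; lia.
  have SN1 : (N - 1).+1 = N by rewrite N_eq; have := K_gt0; lia.
  by rewrite -z2_eq -(chain_z_periodic 2 (3 * K - 1)) -N1_eq /z SN1 invMg invgK mulgKV.
by rewrite xN1 xN invMg invgK mulgA; exact: b2_notin_Z4.
Qed.

End Chain.

Lemma no_quotient_preserving_map (g : gT -> gT) :
    g 1 = 1 -> g b = b ^+ 2 ->
    preserves_quotients g (Z4 n a b) -> preserves_quotients g (Xk n a 1) ->
  False.
Proof.
move=> g1 gb pres_Z4 pres_X1.
apply: (@chain_end_notin_Z4 (fun i => g (a ^+ i))).
- by rewrite expg0.
- by move=> i; apply/mem_Z4_form/pres_Z4; rewrite expgS mulgK a_in_Z4.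
- by move=> i; apply/mem_X1_form/pres_X1; rewrite addnC expgD mulgK a3_in_X1.
by apply/mem_Z4_form; rewrite -gb; apply: pres_Z4; rewrite b_aN1_in_Z4.
Qed.

End ModularGroup.

Lemma modular_group_orders (gT : finGroupType) (n : nat) (a b : gT) :
    (2 <= n)%N -> <<[set a; b]>> = [set: gT] -> #|gT| = (3 ^ n)%N ->
    a ^+ (3 ^ (n - 1)) = 1 -> b ^+ 3 = 1 -> a ^ b = a ^+ (3 ^ (n - 2) + 1) ->
  [/\ #[a] = (3 * 3 ^ (n - 2))%N, #[b] = 3%N & <[a]> :&: <[b]> = 1].
Proof.
move=> n_ge2 gen_ab card_G a_exp b_exp conj_ab.
have exp_n1 : (3 ^ (n - 1) = 3 * 3 ^ (n - 2))%N by rewrite -expnS; congr expn; lia.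
apply: metacyclic_orders gen_ab _ _ _ _.
- rewrite cycle_subG; apply/normP/eqP.
  by rewrite eqEcard cardJg leqnn andbT -cycleJ conj_ab cycle_subG mem_cycle.
- by rewrite card_G mulnC -!expnS; congr expn; lia.
- by rewrite order_dvdn -exp_n1 a_exp.
by rewrite order_dvdn b_exp.
Qed.

Section BasicSets.
Variables (gT : finGroupType) (n : nat) (a b : gT).

Lemma Z1_basic : Z1 b \in basic_sets_A n a b.
Proof. by rewrite inE eqxx orbT. Qed.

Lemma Z4_basic : Z4 n a b \in basic_sets_A n a b.
Proof. by rewrite inE eqxx !orbT. Qed.

Lemma X1_basic : (4 <= n)%N -> Xk n a 1 \in basic_sets_A n a b.
Proof.
move=> n_ge4; have n_lt : (1 < 3 ^ n)%N by rewrite -(expn0 3) ltn_exp2l //; lia.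
rewrite inE; do 6 (apply/orP; right); apply/orP; left.
apply/existsP; exists (Ordinal n_lt); rewrite eqxx /= andbT leq_divRL //.
rewrite (_ : n - 3 = 1 + (n - 4))%N ?expnD; last by lia.
by have := expn_gt0 3 (n - 4); lia.
Qed.

End BasicSets.

Theorem proposition4p1 (n : nat) (gT : finGroupType) (a b : gT) :
  4 <= n ->
  <<[set a; b]>> = [set: gT] ->
  #|gT| = (3 ^ n)%N ->
  a ^+ (3 ^ (n - 1)) = 1 ->
  b ^+ 3 = 1 ->
  a ^ b = a ^+ (3 ^ (n - 2) + 1) ->
  ~ schurian_partition (basic_sets_A n a b).
Proof.
move=> n_ge4 gen_ab card_G a_exp b_exp conj_ab [Gam [right_sub basic_eq]].
have [order_a order_b tiAB] :=
  modular_group_orders (leq_trans (isT : 2 <= 4)%N n_ge4) gen_ab card_G a_exp b_exp conj_ab.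
have orbit_basic S : S \in basic_sets_A n a b ->
    S \in [set orbit 'P 'C_Gam[1 | 'P] w | w : gT] by rewrite basic_eq.
have [g g_e gb] : exists2 g, g \in 'C_Gam[1 | 'P] & g b = b ^+ 2.
  by apply: basic_transport (orbit_basic _ (Z1_basic n a b)) _ _; rewrite !inE eqxx ?orbT.
have /setIP[_ /astab1P g1] := g_e.
apply: (no_quotient_preserving_map n_ge4 order_a order_b tiAB conj_ab g1 gb).
all: apply: (stabilizer_preserves_quotients right_sub) g_e; apply: orbit_basic.
- exact: Z4_basic.
exact: X1_basic.
Qed.
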